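(* Let $a,b\ge1$, let $L$ be a Latin square for the $a\times a$ system and $\bar L$ a Latin square for the $b\times b$ system, both with symbols in the nonnegative integers, such that $L$ removes $[\mathrm{span}(\Delta x)]^{\perp}$ and $\bar L$ removes $[\mathrm{span}(\Delta\bar x)]^{\perp}$, where $\Delta x\in\Delta\mathcal{S}^{2a}$ and $\Delta\bar x\in\Delta\mathcal{S}^{2b}$ are nonzero. Then $L\otimes\bar L$ is a Latin square for the $(a+b)\times(a+b)$ system, and for every $k\in\mathbb{C}$ it removes $[\mathrm{span}(\mathrm{comp}(\Delta x,k\Delta\bar x))]^{\perp}$.
   Context: $\mathcal{S}$ is a signal set of size $M$ with labelling bijection $\mu:\mathbb{Z}_M\to\mathcal{S}$; $\Delta\mathcal{S}=\{s-s':s,s'\in\mathcal{S}\}$; $\mu(u)=(\mu(u_1),\dots,\mu(u_m))^T$ for $u\in\mathbb{Z}_M^m$. For $V\subseteq\mathbb{C}^N$, $V^\perp=\{y:y^Tv=0\ \forall v\in V\}$. A Latin square for the $n\times n$ system is a map $L:\mathbb{Z}_M^{n}\times\mathbb{Z}_M^{n}\to\Sigma$ with no symbol repeated in any row or column. For nonzero $w\in\mathbb{C}^{2n}$, $L$ removes $[\mathrm{span}(w)]^\perp$ if $L(u,v)=L(u',v')$ whenever $[\mu(u)^T-\mu(u')^T\;\;\mu(v)^T-\mu(v')^T]^T\in\mathrm{span}(w)\setminus\{0\}$. For $y\in\mathbb{C}^{2a}$, $z\in\mathbb{C}^{2b}$, the compound vector is $\mathrm{comp}(y,z)=[y_{[1:a]}^T\;z_{[1:b]}^T\;y_{[a+1:2a]}^T\;z_{[b+1:2b]}^T]^T\in\mathbb{C}^{2a+2b}$,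 where $y_{[i:j]}$ is the subvector of components $i$ through $j$. The Cartesian product $L\otimes\bar L$ is defined on $\mathbb{Z}_M^{a+b}\times\mathbb{Z}_M^{a+b}$ by writing row index $(u,\bar u)$ and column index $(v,\bar v)$ with $u,v\in\mathbb{Z}_M^a$ (first $a$ components) and $\bar u,\bar v\in\mathbb{Z}_M^b$ (last $b$ components), and setting $(L\otimes\bar L)((u,\bar u),(v,\bar v))=L(u,v)+\bar L(\bar u,\bar v)\,(\max L+1)$, where $\max L$ is the largest symbol appearing in $L$. *)

From HB Require Import structures.
From mathcomp Require Import all_boot all_order all_algebra.
Set Implicit Arguments. Unset Strict Implicit. Unset Printing Implicit Defensive.
Import Order.TTheory GRing.Theory Num.Theory.
Local Open Scope ring_scope.

(* Z_M^n : words of length n over Z_M = 'I_M (M is the signal set size). *)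
Definition word (M n : nat) := {ffun 'I_n -> 'I_M}.

Definition muv (F : fieldType) (M n : nat) (mu : 'I_M -> F) (u : word M n)
  : 'cV[F]_n := \col_i mu (u i).

Definition is_latin (M n : nat) (L : word M n -> word M n -> nat) : Prop :=
  (forall u, injective (L u)) /\ (forall v, injective (fun u => L u v)).

Definition removes (F : fieldType) (M n : nat) (mu : 'I_M -> F)
  (L : word M n -> word M n -> nat) (w : 'cV[F]_(n + n)) : Prop :=
  forall u u' v v' : word M n,
    let d := col_mx (muv mu u - muv mu u') (muv mu v - muv mu v') in
    (exists c : F, d = c *: w) -> d != 0 -> L u v = L u' v'.

(* x is in (Delta S)^N, where S is the image of mu *)
Definition in_DeltaS (F : fieldType) (M N : nat) (mu : 'I_M -> F) (x : 'cV[F]_N) :=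
  forall i, exists s s' : 'I_M, x i 0 = mu s - mu s'.

Definition compound (F : fieldType) (a b : nat) (y : 'cV[F]_(a + a)) (z : 'cV[F]_(b + b))
  : 'cV[F]_((a + b) + (a + b)) :=
  col_mx (col_mx (usubmx y) (usubmx z)) (col_mx (dsubmx y) (dsubmx z)).

Definition wfst (M a b : nat) (u : word M (a + b)) : word M a :=
  [ffun i => u (lshift b i)].
Definition wsnd (M a b : nat) (u : word M (a + b)) : word M b :=
  [ffun j => u (rshift a j)].

Definition maxL (M n : nat) (L : word M n -> word M n -> nat) : nat :=
  (\max_(p : word M n * word M n) L p.1 p.2)%N.

Definition lprod (M a b : nat) (L : word M a -> word M a -> nat)
  (Lb : word M b -> word M b -> nat) : word M (a + b) -> word M (a + b) -> nat :=
  fun U V => (L (wfst U) (wfst V) + Lb (wsnd U) (wsnd V) * (maxL L).+1)%N.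

From HB Require Import structures.
From mathcomp Require Import all_boot all_order all_algebra.
Import GRing.Theory.
Local Open Scope ring_scope.
Set Implicit Arguments. Unset Strict Implicit.

(* A symbol of the product square L (x) Lb is a two-digit number
   in base (max L + 1): the low digit is a symbol of L, the high digit a
   symbol of Lb.  Since every symbol of L is at most max L, the digits are
   determined by the number, so two cells of L (x) Lb carry the same symbol
   exactly when their projections carry the same symbols in L and in Lb
   ([lprod_eqE]).
   - Latin property: a repeated symbol in a row (column) of L (x) Lb gives a
     repeated symbol in a row (column) of L and of Lb, hence equal words on
     both halves ([lprod_latin]).
   - Removal: the difference vector of two cells of the product, split along
     the compound layout, is c comp(y, z) exactly when the difference vectors
     of the projected cells are c y and c z ([diffv_compound]); L and Lb then
     identify the projected cells ([removes_span]), so L (x) Lb identifies the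
     original ones ([lprod_removes]).  This holds for any z, in particular
     for z = k dxb, which gives the theorem. *)

Section Words.
Variables (F : fieldType) (M : nat) (mu : 'I_M -> F).

Definition diffv (n : nat) (u u' v v' : word M n) : 'cV[F]_(n + n) :=
  col_mx (muv mu u - muv mu u') (muv mu v - muv mu v').

Lemma word_halves_inj (a b : nat) (U V : word M (a + b)) :
  wfst U = wfst V -> wsnd U = wsnd V -> U = V.
Proof.
move=> Efst Esnd; apply/ffunP => i; rewrite -(splitK i).
case: (split i) => k /=.
- by have := congr1 (fun f : word M a => f k) Efst; rewrite !ffunE.
- by have := congr1 (fun f : word M b => f k) Esnd; rewrite !ffunE.
Qed.

Lemma muv_halves (a b : nat) (U : word M (a + b)) :
  muv mu U = col_mx (muv mu (wfst U)) (muv mu (wsnd U)).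
Proof.
apply/matrixP => i j; rewrite -(splitK i).
by case: (split i) => k /=; rewrite ?col_mxEu ?col_mxEd !mxE ffunE.
Qed.

Lemma muv_inj (n : nat) : injective mu -> injective (@muv F M n mu).
Proof.
move=> mu_inj u u' E; apply/ffunP => i.
by have := congr1 (fun m : 'cV[F]_n => m i ord0) E; rewrite !mxE => /mu_inj.
Qed.

(* [removes] only speaks of nonzero differences; a zero difference means the
   two cells coincide, so L identifies every pair of cells whose difference
   lies on the line spanned by w. *)
Lemma removes_span (n : nat) (L : word M n -> word M n -> nat) (w : 'cV_(n + n))
  (u u' v v' : word M n) (c : F) :
  injective mu -> removes mu L w -> diffv u u' v v' = c *: w -> L u v = L u' v'.
Proof.
move=> mu_inj hL Ed.
have [d0 | dn0] := boolP (diffv u u' v v' == 0); last by apply: hL => //; exists c.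
move: d0; rewrite /diffv col_mx_eq0 !subr_eq0 => /andP[/eqP Eu /eqP Ev].
by rewrite (muv_inj mu_inj Eu) (muv_inj mu_inj Ev).
Qed.

Lemma diffv_compound (a b : nat) (U U' V V' : word M (a + b))
  (y : 'cV_(a + a)) (z : 'cV_(b + b)) (c : F) :
  diffv U U' V V' = c *: compound y z ->
  diffv (wfst U) (wfst U') (wfst V) (wfst V') = c *: y /\
  diffv (wsnd U) (wsnd U') (wsnd V) (wsnd V') = c *: z.
Proof.
have subE n1 n2 (A B : 'cV[F]_n1) (C D : 'cV[F]_n2) :
    col_mx A C - col_mx B D = col_mx (A - B) (C - D).
  by rewrite opp_col_mx add_col_mx.
rewrite /diffv /compound !muv_halves !subE !scale_col_mx.
move=> /eq_col_mx [/eq_col_mx [Eyu Ezu] /eq_col_mx [Eyd Ezd]].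
by rewrite -(vsubmxK y) -(vsubmxK z) !scale_col_mx Eyu Eyd Ezu Ezd.
Qed.

End Words.

Lemma maxL_ub (M n : nat) (L : word M n -> word M n -> nat) (u v : word M n) :
  (L u v <= maxL L)%N.
Proof. exact: (@leq_bigmax _ (fun p : word M n * word M n => L p.1 p.2) (u, v)). Qed.

Lemma base_digits_inj (m x1 y1 x2 y2 : nat) : (x1 <= m)%N -> (x2 <= m)%N ->
  (x1 + y1 * m.+1 = x2 + y2 * m.+1)%N -> x1 = x2 /\ y1 = y2.
Proof.
move=> x1m x2m E.
have Ex : x1 = x2.
  have := congr1 (fun t => t %% m.+1)%N E.
  by rewrite ![(_ + _ * _)%N]addnC !modnMDl !modn_small.
split => //; subst x2; move/addnI: E => /eqP.
by rewrite eqn_pmul2r // => /eqP.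
Qed.

Lemma lprod_eqE (M a b : nat) (L : word M a -> word M a -> nat)
  (Lb : word M b -> word M b -> nat) (U U' V V' : word M (a + b)) :
  lprod L Lb U V = lprod L Lb U' V' <->
  L (wfst U) (wfst V) = L (wfst U') (wfst V') /\
  Lb (wsnd U) (wsnd V) = Lb (wsnd U') (wsnd V').
Proof.
split; first exact/base_digits_inj/maxL_ub/maxL_ub.
by rewrite /lprod => -[-> ->].
Qed.

Lemma lprod_latin (M a b : nat) (L : word M a -> word M a -> nat)
  (Lb : word M b -> word M b -> nat) :
  is_latin L -> is_latin Lb -> is_latin (lprod L Lb).
Proof.
move=> [Lrow Lcol] [Lbrow Lbcol]; split.
- move=> U V V' /lprod_eqE [E Eb].
  exact: word_halves_inj (Lrow _ _ _ E) (Lbrow _ _ _ Eb).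
- move=> V U U' /lprod_eqE [E Eb].
  exact: word_halves_inj (Lcol _ _ _ E) (Lbcol _ _ _ Eb).
Qed.

Lemma lprod_removes (F : fieldType) (M : nat) (mu : 'I_M -> F) (a b : nat)
  (L : word M a -> word M a -> nat) (Lb : word M b -> word M b -> nat)
  (y : 'cV_(a + a)) (z : 'cV_(b + b)) :
  injective mu -> removes mu L y -> removes mu Lb z ->
  removes mu (lprod L Lb) (compound y z).
Proof.
move=> mu_inj Ly Lbz U U' V V' /= [c Ed] _.
have [Efst Esnd] := diffv_compound Ed.
by apply/lprod_eqE; split; [apply: removes_span Efst | apply: removes_span Esnd].
Qed.

Theorem lemma10 (F : fieldType) (M : nat) (mu : 'I_M -> F) (mu_inj : injective mu)
  (a b : nat) (ha : (1 <= a)%N) (hb : (1 <= b)%N)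
  (L : word M a -> word M a -> nat) (Lb : word M b -> word M b -> nat)
  (dx : 'cV[F]_(a + a)) (dxb : 'cV[F]_(b + b))
  (hdx : in_DeltaS mu dx) (hdxb : in_DeltaS mu dxb)
  (hdx0 : dx != 0) (hdxb0 : dxb != 0)
  (hL : is_latin L) (hLb : is_latin Lb)
  (hLr : removes mu L dx) (hLbr : removes mu Lb dxb) :
  is_latin (lprod L Lb) /\
  (forall k : F, removes mu (lprod L Lb) (compound dx (k *: dxb))).
Proof.
split; first exact: lprod_latin.
move=> k; apply: lprod_removes => //.
(* Lb removes the line spanned by k dxb, which is contained in span dxb. *)
move=> u u' v v' /= [c Ed]; apply: hLbr; exists (c * k).
by rewrite Ed scalerA.
Qed.
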